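(* Let $T:\mathbb{R}_+^N\to\mathbb{R}_{++}^N$ be a standard interference mapping, let $\|\cdot\|_a$ be a monotone norm on $\mathbb{R}^N$, and for each $\bar p>0$ let $(\mathbf{p}_{\bar p},c_{\bar p})$ be the unique solution of the problem described in the context, with $\lambda_{\bar p}:=1/c_{\bar p}$. Let $T_\infty$ be the asymptotic mapping of $T$. Then: (i) The limit $\lambda_\infty:=\lim_{\bar p\to\infty}\lambda_{\bar p}\ge 0$ exists. (ii) Assume in addition that $T$ is continuous. Let $(\bar p_n)_{n\in\mathbb{N}}\subset\mathbb{R}_{++}$ be any monotonically increasing sequence with $\bar p_n\to\infty$, and set $\mathbf{x}_n:=\mathbf{p}_{\bar p_n}/\|\mathbf{p}_{\bar p_n}\|_a$. If $\mathbf{x}_\infty\in\mathbb{R}_+^N$ is an accumulation point of the bounded sequence $(\mathbf{x}_n)_{n\in\mathbb{N}}$, then $(\mathbf{x}_\infty,\lambda_\infty)$ solves the problem: find $(\mathbf{x},\lambda)\in\mathbb{R}_+^N\times\mathbb{R}_+$ with $T_\infty(\mathbf{x})=\lambda\mathbf{x}$ and $\|\mathbf{x}\|_a=1$. (iii) Under the assumptions and notation of (ii), if the problem ''find $(\mathbf{x},\lambda)\in\mathbb{R}_+^N\times\mathbb{R}_+$ with $T_\infty(\mathbf{x})=\lambda\mathbf{x}$ and $\|\mathbf{x}\|_a=1$'' has a unique solution $(\mathbf{x}',\lambda')$, and it lies in $\mathbb{R}_{++}^N\times\mathbb{R}_{++}$, then $\lim_{n\to\infty}\mathbf{x}_n=\mathbf{x}'$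 (so $\mathbf{x}_\infty=\mathbf{x}'$) and $\lambda'=\lambda_\infty$.
   Context: Vector inequalities are coordinatewise; $\mathbb{R}_+$, $\mathbb{R}_{++}$ denote nonnegative and positive reals. A norm $\|\cdot\|$ on $\mathbb{R}^N$ is monotone if $\mathbf{0}\le\mathbf{x}\le\mathbf{y}$ implies $\|\mathbf{x}\|\le\|\mathbf{y}\|$. A function $f:\mathbb{R}^N\to\mathbb{R}_{++}\cup\{\infty\}$ is a standard interference function if: (1) for all $\mathbf{x}\in\mathbb{R}_+^N$ and all $\alpha>1$, $\alpha f(\mathbf{x})>f(\alpha\mathbf{x})$; (2) for all $\mathbf{x}_1,\mathbf{x}_2\in\mathbb{R}_+^N$, $\mathbf{x}_1\ge\mathbf{x}_2$ implies $f(\mathbf{x}_1)\ge f(\mathbf{x}_2)$; (3) $f(\mathbf{x})=\infty$ iff $\mathbf{x}\notin\mathbb{R}_+^N$. A standard interference mapping is $T:\mathbb{R}_+^N\to\mathbb{R}_{++}^N$, $T(\mathbf{x})=(t_1(\mathbf{x}),\dots,t_N(\mathbf{x}))$, with each $t_i$ a standard interference function. For a proper function $f:\mathbb{R}^N\to\mathbb{R}\cup\{\infty\}$, its asymptotic function is $f_\infty(\mathbf{x})=\inf\{\liminf_{n\to\infty} f(h_n\mathbf{x}_n)/h_n : h_n\to\infty,\ \mathbf{x}_n\to\mathbf{x}\}$. The asymptotic mapping of $T$ is $T_\infty(\mathbf{x})=((t_1)_\infty(\mathbf{x}),\dots,(t_N)_\infty(\mathbf{x}))$ on $\mathbb{R}_+^N$.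 For a power budget $\bar p>0$, consider the problem: maximize $c$ over $(\mathbf{p},c)\in\mathbb{R}_+^N\times\mathbb{R}_{++}$ subject to $\mathbf{p}=cT(\mathbf{p})$ and $\|\mathbf{p}\|_a\le\bar p$. It is known that this problem has a unique solution $(\mathbf{p}_{\bar p},c_{\bar p})\in\mathbb{R}_{++}^N\times\mathbb{R}_{++}$, that it satisfies $T(\mathbf{p}_{\bar p})=(1/c_{\bar p})\mathbf{p}_{\bar p}$ and $\|\mathbf{p}_{\bar p}\|_a=\bar p$, and that $\bar p\mapsto c_{\bar p}$ is strictly increasing. *)

From HB Require Import structures.
From mathcomp Require Import all_boot all_order all_algebra.
From mathcomp Require Import all_classical all_reals all_analysis.
Set Implicit Arguments. Unset Strict Implicit. Unset Printing Implicit Defensive.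
Import Order.TTheory GRing.Theory Num.Theory.
Import numFieldNormedType.Exports.
Local Open Scope classical_set_scope.
Local Open Scope ring_scope.

(* Vectors of R^N are row vectors 'rV[R]_N; the i-th coordinate of x is x 0 i. *)

Section Defs.
Context {R : realType} {N : nat}.

Definition nonneg (x : 'rV[R]_N) : Prop := forall i, 0 <= x 0 i.
Definition positive (x : 'rV[R]_N) : Prop := forall i, 0 < x 0 i.
Definition vle (x y : 'rV[R]_N) : Prop := forall i, x 0 i <= y 0 i.

Definition monotone_norm (na : 'rV[R]_N -> R) : Prop :=
  [/\ forall x, na x = 0 -> x = 0,
      forall (a : R) x, na (a *: x) = `|a| * na x,
      forall x y, na (x + y) <= na x + na y &
      forall x y, nonneg x -> vle x y -> na x <= na y].

(* A standard interference function, given by its (finite, positive)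
   values on R_+^N; its value is +oo outside R_+^N (see ext_fun). *)
Definition standard_interference (f : 'rV[R]_N -> R) : Prop :=
  [/\ forall x, nonneg x -> 0 < f x,
      forall x (alpha : R), nonneg x -> 1 < alpha -> f (alpha *: x) < alpha * f x &
      forall x1 x2, nonneg x2 -> vle x2 x1 -> f x2 <= f x1].

Definition ext_fun (f : 'rV[R]_N -> R) (x : 'rV[R]_N) : \bar R :=
  if `[< nonneg x >] then (f x)%:E else +oo%E.

Definition asymptotic_fun (f : 'rV[R]_N -> R) (x : 'rV[R]_N) : \bar R :=
  ereal_inf [set v : \bar R | exists (h : R^nat) (xs : nat -> 'rV[R]_N),
    [/\ h @ \oo --> +oo, xs @ \oo --> x &
        v = limn_einf (fun n => (ext_fun f (h n *: xs n) * ((h n)^-1)%:E)%E)]].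

Definition standard_interference_mapping (T : 'rV[R]_N -> 'rV[R]_N) : Prop :=
  forall i, standard_interference (fun x => T x 0 i).

Definition asymptotic_mapping (T : 'rV[R]_N -> 'rV[R]_N) (x : 'rV[R]_N) (i : 'I_N)
  : \bar R := asymptotic_fun (fun y => T y 0 i) x.

Definition feasible (T : 'rV[R]_N -> 'rV[R]_N) (na : 'rV[R]_N -> R) (pb : R)
  (p : 'rV[R]_N) (c : R) : Prop :=
  [/\ nonneg p, 0 < c, p = c *: T p & na p <= pb].

Definition solves_budget (T : 'rV[R]_N -> 'rV[R]_N) (na : 'rV[R]_N -> R) (pb : R)
  (p : 'rV[R]_N) (c : R) : Prop :=
  feasible T na pb p c /\ (forall p' c', feasible T na pb p' c' -> c' <= c).

Definition solves_asymptotic (T : 'rV[R]_N -> 'rV[R]_N) (na : 'rV[R]_N -> R)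
  (x : 'rV[R]_N) (lam : R) : Prop :=
  [/\ nonneg x, 0 <= lam, na x = 1 &
      forall i, asymptotic_mapping T x i = (lam * x 0 i)%:E].

End Defs.

From HB Require Import structures.
From mathcomp Require Import all_boot all_order all_algebra.
From mathcomp Require Import all_classical all_reals all_analysis.
From mathcomp Require Import ring lra.
Import Order.TTheory GRing.Theory Num.Theory.
Import numFieldNormedType.Exports.
Local Open Scope classical_set_scope.
Local Open Scope ring_scope.
Set Implicit Arguments. Unset Strict Implicit. Unset Printing Implicit Defensive.

(* lam p = 1 / c p is positive and nonincreasing in the budget p,
   so it tends to its infimum lam_oo.
   For a standard interference function f and x >= 0, the quotient f (h x) / h
   is nonincreasing in h, and the asymptotic function is its infimum over h > 0:
   along any h_n -> oo, y_n -> x, eventually y_n >= r x for every r < 1.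
   Let X be a cluster point of x_n = p_n / pbar_n, so that
   t_i (pbar_n x_n) = lam_n pbar_n x_n,i.  For fixed h and all large n,
   t_i (h x_n) / h >= lam_n x_n,i >= lam_oo x_n,i, and continuity of T carries
   this to X.  Conversely, for n with x_n >= (1 - e) X, monotonicity gives
   t_i ((1 - e) pbar_n X) <= lam_n pbar_n x_n,i, which bounds the infimum by
   about lam_oo X_i.  Hence T_oo (X) = lam_oo X, and ||X|| = 1 because a norm on
   R^N is continuous.  Finally the x_n stay in a compact box, so if the
   asymptotic eigenproblem has a unique solution, it is the only cluster point
   of (x_n), which therefore converges to it. *)

Lemma ler_add_mul01 {R : realFieldType} (a b K : R) :
  (forall e, 0 < e < 1 -> a <= b + e * K) -> a <= b.
Proof.
move=> abK; apply/ler_addgt0Pr => d d0.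
pose e := Num.min (2^-1) (d / (`|K| + 1)).
have K1 : 0 < `|K| + 1 by rewrite ltr_wpDl.
have e0 : 0 < e by rewrite lt_min invr_gt0 ltr0n divr_gt0.
have e1 : e < 1 by rewrite gt_min invf_lt1 ?ltr1n.
have eK : e * (`|K| + 1) <= d by rewrite -ler_pdivlMr // ge_min lexx orbT.
apply: le_trans (abK e (introT andP (conj e0 e1))) _.
rewrite lerD2l; apply: le_trans (_ : e * `|K| <= d).
  by rewrite ler_wpM2l ?(ltW e0) ?ler_norm.
by apply: le_trans eK; rewrite ler_wpM2l ?(ltW e0) ?lerDl.
Qed.

Section liminf_bounds.
Context {R : realType}.
Implicit Types (u : (\bar R)^nat) (c : \bar R).

Lemma limn_einf_ge c u : (\forall n \near \oo, (c <= u n)%E) -> (c <= limn_einf u)%E.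
Proof.
move=> [n0 _ cu]; rewrite limn_einf_lim; apply: lime_ge; first exact: is_cvg_einfs.
exists n0 => // n /= n0n; apply: le_ereal_inf_tmp => _ [k /= nk <-].
by apply: cu; rewrite /= (leq_trans n0n nk).
Qed.

Lemma limn_einf_le c u : (\forall n \near \oo, (u n <= c)%E) -> (limn_einf u <= c)%E.
Proof.
move=> [n0 _ uc]; rewrite limn_einf_lim; apply: lime_le; first exact: is_cvg_einfs.
exists n0 => // n /= n0n; apply: le_trans (uc n n0n).
by apply: ereal_inf_lbound; exists n => /=.
Qed.

End liminf_bounds.

Section cluster_points.
Context {T : topologicalType} (u : nat -> T) (x : T).
Hypothesis ux : cluster (u @ \oo) x.

Lemma cluster_near (P : nat -> Prop) (Q : T -> Prop) :
  (\forall n \near \oo, P n) -> (\forall y \near x, Q y) -> exists n, P n /\ Q (u n).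
Proof.
move=> FP xQ; have Fu : (u @ \oo) [set u n | n in P] by apply: filterS FP => n; exists n.
by have [_ [[n Pn <-] Qun]] := ux Fu xQ; exists n.
Qed.

Lemma cluster_le_within {R : realType} (A : set T) (f g : T -> R) :
  (forall n, A (u n)) ->
  f @ within A (nbhs x) --> f x -> g @ within A (nbhs x) --> g x ->
  (\forall n \near \oo, f (u n) <= g (u n)) -> f x <= g x.
Proof.
move=> Au fx gx fgu; rewrite leNgt; apply/negP => gfx.
pose m := (f x + g x) / 2.
have fm : \forall y \near within A (nbhs x), m < f y.
  by apply: (cvgr_gt (f x) fx); rewrite /m; lra.
have gm : \forall y \near within A (nbhs x), g y < m.
  by apply: (cvgr_lt (g x) gx); rewrite /m; lra.
have [n [fgn /(_ (Au n))[]]] := cluster_near fgu (filterI fm gm).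
lra.
Qed.

End cluster_points.

Section row_vectors.
Context {R : realType} {N : nat}.
Implicit Types (x y : 'rV[R]_N).

Lemma nonnegZ x (h : R) : 0 <= h -> nonneg x -> nonneg (h *: x).
Proof. by move=> h0 x0 j; rewrite mxE mulr_ge0. Qed.

Lemma nonnegZ_gt0 x (h : R) : 0 < h -> nonneg (h *: x) -> nonneg x.
Proof. by move=> h0 hx j; have := hx j; rewrite mxE pmulr_rge0. Qed.

Lemma vleZ x y (h : R) : 0 <= h -> vle x y -> vle (h *: x) (h *: y).
Proof. by move=> h0 xy j; rewrite !mxE ler_wpM2l. Qed.

Lemma near_coord_dist x (e : R) : 0 < e ->
  \forall y \near x, forall j, `|x 0 j - (y : 'rV[R]_N) 0 j| < e.
Proof.
move=> e0; apply: (@filter_forall _ _ (fun j y => `|x 0 j - y 0 j| < e) (nbhs x) _) => j.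
by have /cvgrPdist_lt/(_ _ e0) := @coord_continuous R 1 N 0 j x.
Qed.

Lemma near_vle_scale x (r : R) : nonneg x -> r < 1 ->
  \forall y \near x, nonneg y -> vle (r *: x) y.
Proof.
move=> x0 r1.
suff : \forall y \near x, forall j, nonneg y -> r * x 0 j <= y 0 j.
  by apply: filterS => y rxy y0 j; rewrite mxE; exact: rxy.
apply: (@filter_forall _ _ (fun j y => nonneg y -> r * x 0 j <= y 0 j) (nbhs x) _) => j.
have [xj0|xj_gt0] := eqVneq (x 0 j) 0.
  by near=> y => y0; rewrite xj0 mulr0; exact: y0.
have rx : r * x 0 j < x 0 j.
  by rewrite gtr_pMl // lt_neqAle eq_sym xj_gt0 x0.
by apply: filterS (cvgr_gt _ (@coord_continuous R 1 N 0 j x) _ rx) => y /ltW.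
Unshelve. all: by end_near.
Qed.

Lemma cvg_scale_within_nonneg x (h : R) : 0 <= h ->
  (h *: y) @[y --> within [set y | nonneg y] (nbhs x)] -->
  within [set y | nonneg y] (nbhs (h *: x)).
Proof.
move=> h0 P hxP; rewrite !nbhs_simpl /=.
have := @scaler_continuous _ _ h x _ hxP; rewrite !nbhs_simpl /=.
by apply: filterS => y hyP y0; apply: hyP; exact: nonnegZ.
Qed.

Lemma cvg_bounded_unique_cluster (u : nat -> 'rV[R]_N) (b : 'I_N -> R) x :
  (forall n j, `|u n 0 j| <= b j) -> (forall y, cluster (u @ \oo) y -> y = x) ->
  u @ \oo --> x.
Proof.
move=> ub ux; pose c j := b j + `|x 0 j| + 1.
pose V := [set v : 'rV[R]_N | forall j, `[- c j, c j]%classic (v 0 j)].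
have V_compact : compact V.
  exact: (@rV_compact R N _ (fun j => @segment_compact R (- c j) (c j))).
have b0 j : 0 <= b j := le_trans (normr_ge0 _) (ub 0%N j).
have FV : (u @ \oo) V.
  exists 0%N => // n _ j /=; rewrite in_itv /= -ler_norml.
  by apply: le_trans (ub n j) _; rewrite /c -addrA lerDl addr_ge0.
have xV : nbhs x V.
  apply: filterS (near_coord_dist x ltr01) => y xy j; rewrite /= in_itv /=.
  have := xy j; rewrite ltr_norml /c.
  have := ler_norm (x 0 j); have := lerNnormlW (lexx `|x 0 j|); have := b0 j; lra.
have [z [_ z_cluster]] := V_compact _ _ FV.
apply: compact_cluster_set1 (@norm_hausdorff _ _) V_compact xV _ FV _.
by apply/seteqP; split => [y /ux -> //|y ->]; rewrite -(ux z z_cluster).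
Qed.

End row_vectors.

Section monotone_norm.
Context {R : realType} {N : nat} (na : 'rV[R]_N -> R).
Hypothesis na_norm : monotone_norm na.
Implicit Types (x y : 'rV[R]_N).

Lemma na_eq0 x : na x = 0 -> x = 0.
Proof. by case: na_norm => + _ _ _; apply. Qed.

Lemma naZ (a : R) x : na (a *: x) = `|a| * na x.
Proof. by case: na_norm => _ + _ _; apply. Qed.

Lemma naD x y : na (x + y) <= na x + na y.
Proof. by case: na_norm => _ _ + _; apply. Qed.

Lemma na_le x y : nonneg x -> vle x y -> na x <= na y.
Proof. by case: na_norm => _ _ _; apply. Qed.

Lemma na0 : na 0 = 0.
Proof. by rewrite -(scale0r 0) naZ normr0 mul0r. Qed.

Lemma naN x : na (- x) = na x.
Proof. by rewrite -scaleN1r naZ normrN normr1 mul1r. Qed.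

Lemma na_ge0 x : 0 <= na x.
Proof. by have := naD x (- x); rewrite naN subrr na0; lra. Qed.

Lemma na_dist x y : `|na x - na y| <= na (x - y).
Proof.
rewrite ler_norml; apply/andP; split.
  by have := naD (y - x) x; rewrite subrK -opprB naN; lra.
by have := naD (x - y) y; rewrite subrK; lra.
Qed.

Lemma na_le_sum x : na x <= \sum_j `|x 0 j| * na (delta_mx 0 j).
Proof.
rewrite {1}[x]row_sum_delta.
elim/big_rec2: _ => [|j s v _ IH]; first by rewrite na0.
by apply: le_trans (naD _ _) _; rewrite naZ lerD2l.
Qed.

Lemma na_continuous : continuous na.
Proof.
move=> x; apply/(@cvgrPdist_lt _ _ _ (nbhs x)) => e e0.
pose K := \sum_j na (delta_mx 0 j).
have K0 : 0 <= K by apply: sumr_ge0 => j _; exact: na_ge0.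
have d0 : 0 < e / (K + 1) by rewrite divr_gt0 // ltr_wpDl.
apply: filterS (near_coord_dist x d0) => y xy.
apply: le_lt_trans (na_dist x y) _; apply: le_lt_trans (na_le_sum (x - y)) _.
apply: (@le_lt_trans _ _ (e / (K + 1) * K)); last first.
  by rewrite mulrAC ltr_pdivrMr ?ltr_wpDl // ltr_pM2l // ltrDl.
rewrite mulr_sumr; apply: ler_sum => j _.
by rewrite ler_wpM2r ?na_ge0 // !mxE ltW.
Qed.

Lemma na_delta_gt0 j : 0 < na (delta_mx 0 j).
Proof.
rewrite lt_neqAle na_ge0 andbT eq_sym; apply/eqP => /na_eq0/matrixP/(_ 0 j).
by rewrite !mxE !eqxx /= => /eqP; rewrite oner_eq0.
Qed.

Lemma coord_le_na x j : nonneg x -> x 0 j * na (delta_mx 0 j) <= na x.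
Proof.
move=> x0; rewrite -(ger0_norm (x0 j)) -naZ; apply: na_le.
  by apply: nonnegZ => // k; rewrite mxE ler0n.
by move=> k; rewrite !mxE eqxx /=; case: eqVneq => [->|_]; rewrite ?mulr1 ?mulr0.
Qed.

End monotone_norm.

Definition ray_slope {R : realType} {N : nat} (f : 'rV[R]_N -> R) (x : 'rV[R]_N) : R :=
  inf [set f (h *: x) / h | h in [set h : R | 0 < h]].

Section standard_interference.
Context {R : realType} {N : nat} (f : 'rV[R]_N -> R).
Hypothesis f_si : standard_interference f.
Implicit Types (x y : 'rV[R]_N).

Lemma si_gt0 x : nonneg x -> 0 < f x.
Proof. by case: f_si => + _ _; apply. Qed.

Lemma si_le x y : nonneg x -> vle x y -> f x <= f y.
Proof. by case: f_si => _ _ + x0 xy; apply. Qed.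

Lemma si_ratio_nonincr x (h1 h2 : R) : nonneg x -> 0 < h1 -> h1 <= h2 ->
  f (h2 *: x) / h2 <= f (h1 *: x) / h1.
Proof.
move=> x0 h1_gt0; rewrite le_eqVlt => /predU1P[<-//|h12].
have h2_gt0 : 0 < h2 by apply: lt_trans h12.
have a1 : 1 < h2 / h1 by rewrite ltr_pdivlMr // mul1r.
case: f_si => _ /(_ (h1 *: x) _ (nonnegZ (ltW h1_gt0) x0) a1) + _.
rewrite scalerA mulrVK ?unitfE ?gt_eqF // => /ltW le_h.
by rewrite ler_pdivrMr // mulrC mulrA mulrAC.
Qed.

Lemma ray_quotient_gt0 x (h : R) : nonneg x -> 0 < h -> 0 < f (h *: x) / h.
Proof. move=> x0 h0; exact: divr_gt0 (si_gt0 (nonnegZ (ltW h0) x0)) h0. Qed.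

Lemma has_inf_ray x : nonneg x -> has_inf [set f (h *: x) / h | h in [set h : R | 0 < h]].
Proof.
move=> x0; split; first by exists (f (1 *: x) / 1), 1 => //=.
by exists 0 => _ [h /= h0 <-]; exact/ltW/ray_quotient_gt0.
Qed.

Lemma ray_slope_le x (h : R) : nonneg x -> 0 < h -> ray_slope f x <= f (h *: x) / h.
Proof. by move=> x0 h0; apply: ge_inf; [case: (has_inf_ray x0) | exists h]. Qed.

Lemma ray_slope_ge x (a : R) :
  (forall h, 0 < h -> a <= f (h *: x) / h) -> a <= ray_slope f x.
Proof.
move=> ax; apply: lb_le_inf => [|_ [h /= h0 <-]]; last exact: ax.
by exists (f (1 *: x) / 1), 1 => //=.
Qed.

Lemma ray_slope_ge0 x : nonneg x -> 0 <= ray_slope f x.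
Proof. by move=> x0; apply: ray_slope_ge => h h0; exact/ltW/ray_quotient_gt0. Qed.

Lemma ray_slope_adherent x (e : R) : nonneg x -> 0 < e ->
  exists2 h, 0 < h & f (h *: x) / h < ray_slope f x + e.
Proof.
by move=> x0 e0; have [_ [h /= h0 <-] he] := inf_adherent e0 (has_inf_ray x0); exists h.
Qed.

Lemma asymptotic_fun_le_ray_slope x :
  nonneg x -> (asymptotic_fun f x <= (ray_slope f x)%:E)%E.
Proof.
move=> x0; apply: le_trans (ereal_inf_lbound _) _.
  exists (fun n => n%:R), (fun=> x); split=> //; [exact: cvgr_idn | exact: cvg_cst].
apply/lee_addgt0Pr => e e0; have [h h0 he] := ray_slope_adherent x0 e0.
apply: limn_einf_le; near=> n.
have hn : h <= n%:R by near: n; exact: nbhs_infty_ger.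
have n0 : 0 < (n%:R : R) by apply: lt_le_trans hn.
rewrite /ext_fun asboolT; last exact: nonnegZ (ltW n0) x0.
rewrite -EFinM -EFinD lee_fin.
exact: le_trans (si_ratio_nonincr x0 h0 hn) (ltW he).
Unshelve. all: by end_near.
Qed.

Lemma ray_slope_le_asymptotic_fun x :
  nonneg x -> ((ray_slope f x)%:E <= asymptotic_fun f x)%E.
Proof.
move=> x0; apply: le_ereal_inf_tmp => _ [h [y [h_oo yx ->]]].
(* eventually r x <= y n, hence f (h n y n) / h n >= r f (r h n x) / (r h n) *)
apply/lee_mul01Pr; first by rewrite lee_fin ray_slope_ge0.
move=> r /andP[r0 r1]; apply: limn_einf_ge.
have := yx _ (near_vle_scale x0 r1); rewrite !nbhs_simpl => rxy.
near=> n.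
have rxyn : nonneg (y n) -> vle (r *: x) (y n) by near: n.
have hn0 : 0 < h n by near: n; exact: (cvgryPgt _).1 h_oo 0.
rewrite /ext_fun; case: asboolP => [hyn|_]; last first.
  by rewrite gt0_mulye ?leey // lte_fin invr_gt0.
have rh0 : 0 < r * h n by rewrite mulr_gt0.
rewrite -!EFinM lee_fin.
apply: (@le_trans _ _ (r * (f ((r * h n) *: x) / (r * h n)))).
  by apply: ler_wpM2l; [exact: ltW | exact: ray_slope_le].
have -> : r * (f ((r * h n) *: x) / (r * h n)) = f ((r * h n) *: x) / h n.
  by field; rewrite !gt_eqF.
rewrite ler_pM2r ?invr_gt0 //; apply: si_le; first exact: nonnegZ (ltW rh0) x0.
by rewrite mulrC -scalerA; exact: vleZ (ltW hn0) (rxyn (nonnegZ_gt0 hn0 hyn)).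
Unshelve. all: by end_near.
Qed.

Lemma asymptotic_fun_ray x : nonneg x -> asymptotic_fun f x = (ray_slope f x)%:E.
Proof.
move=> x0; apply/le_anti/andP; split.
  exact: asymptotic_fun_le_ray_slope.
exact: ray_slope_le_asymptotic_fun.
Qed.

End standard_interference.

Section power_budget.
Context {R : realType} {N : nat} (T : 'rV[R]_N -> 'rV[R]_N) (na : 'rV[R]_N -> R)
  (pp : R -> 'rV[R]_N) (cc : R -> R).
Hypothesis T_si : standard_interference_mapping T.
Hypothesis na_norm : monotone_norm na.
Hypothesis pp_sol : forall pb, 0 < pb ->
  [/\ positive (pp pb), 0 < cc pb, T (pp pb) = (cc pb)^-1 *: pp pb & na (pp pb) = pb].
Hypothesis cc_incr : forall pb1 pb2, 0 < pb1 -> pb1 < pb2 -> cc pb1 < cc pb2.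

Let lam pb := (cc pb)^-1.
Let lam_inf := inf [set lam pb | pb in [set pb : R | 0 < pb]].

Lemma lam_gt0 pb : 0 < pb -> 0 < lam pb.
Proof. by case/pp_sol => _ cc0 _ _; rewrite invr_gt0. Qed.

Lemma lam_nonincr pb1 pb2 : 0 < pb1 -> pb1 <= pb2 -> lam pb2 <= lam pb1.
Proof.
move=> pb1_gt0; rewrite le_eqVlt => /predU1P[<-//|pb12].
have [_ cc1 _ _] := pp_sol pb1_gt0; have [_ cc2 _ _] := pp_sol (lt_trans pb1_gt0 pb12).
by rewrite /lam lef_pV2 ?posrE // ltW // cc_incr.
Qed.

Lemma has_inf_lam : has_inf [set lam pb | pb in [set pb : R | 0 < pb]].
Proof.
split; first by exists (lam 1), 1 => //=.
by exists 0 => _ [pb /= pb0 <-]; exact/ltW/lam_gt0.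
Qed.

Lemma lam_inf_ge0 : 0 <= lam_inf.
Proof.
by apply: lb_le_inf (has_inf_lam.1) _ => _ [pb /= pb0 <-]; exact/ltW/lam_gt0.
Qed.

Lemma lam_inf_le pb : 0 < pb -> lam_inf <= lam pb.
Proof. by move=> pb0; apply: ge_inf has_inf_lam.2 _ _; exists pb. Qed.

Lemma near_lam_lt e : 0 < e -> \forall pb \near +oo, lam pb < lam_inf + e.
Proof.
move=> e0; have [_ [pb0 /= pb0_gt0 <-] pb0e] := inf_adherent e0 has_inf_lam.
near=> pb; apply: le_lt_trans pb0e; apply: lam_nonincr pb0_gt0 _.
by near: pb; apply: nbhs_pinfty_ge; rewrite num_real.
Unshelve. all: by end_near.
Qed.

Lemma lam_cvg : lam pb @[pb --> +oo] --> lam_inf.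
Proof.
apply/cvgrPdist_lt => e e0; near=> pb.
have pb0 : 0 < pb by near: pb; apply: nbhs_pinfty_gt; rewrite num_real.
rewrite ler0_norm ?subr_le0 ?lam_inf_le // opprB ltrBlDl.
by near: pb; exact: near_lam_lt.
Unshelve. all: by end_near.
Qed.

Section normalized_powers.
Variable pbar : nat -> R.
Hypothesis pbar_gt0 : forall n, 0 < pbar n.
Hypothesis pbar_oo : pbar @ \oo --> +oo.
Let xs n := (na (pp (pbar n)))^-1 *: pp (pbar n).

Lemma scale_xs n : pbar n *: xs n = pp (pbar n).
Proof.
rewrite /xs; have [_ _ _ ->] := pp_sol (pbar_gt0 n).
by rewrite scalerA mulfV ?scale1r ?gt_eqF.
Qed.

Lemma xs_nonneg n : nonneg (xs n).
Proof.
apply: (nonnegZ_gt0 (pbar_gt0 n)); rewrite scale_xs.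
have [pp_pos _ _ _] := pp_sol (pbar_gt0 n).
by move=> j; exact/ltW/pp_pos.
Qed.

Lemma na_xs n : na (xs n) = 1.
Proof.
have [_ _ _ na_pp] := pp_sol (pbar_gt0 n).
by rewrite /xs naZ // na_pp ger0_norm ?invr_ge0 ?ltW // mulVf ?gt_eqF.
Qed.

Lemma T_scale_xs n i : T (pbar n *: xs n) 0 i = lam (pbar n) * (pbar n * xs n 0 i).
Proof.
rewrite scale_xs; have [_ _ -> _] := pp_sol (pbar_gt0 n).
by rewrite mxE -scale_xs mxE.
Qed.

Lemma near_lam_pbar_lt e : 0 < e -> \forall n \near \oo, lam (pbar n) < lam_inf + e.
Proof. by move=> e0; exact: pbar_oo _ (near_lam_lt e0). Qed.

Hypothesis T_cont : {within [set x | nonneg x], continuous T}.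

Section cluster_point.
Variable X : 'rV[R]_N.
Hypothesis X_cluster : cluster (xs @ \oo) X.

Lemma cluster_nonneg : nonneg X.
Proof.
move=> j.
apply: (cluster_le_within X_cluster (A := setT) (f := fun=> 0) (g := fun y => y 0 j)) => //.
- exact: cvg_cst.
- exact: cvg_within_filter (@coord_continuous R 1 N 0 j X).
- by apply: nearW => n; exact: xs_nonneg.
Qed.

Lemma cluster_na : na X = 1.
Proof.
have na_cvg : na @ within setT (nbhs X) --> na X.
  exact: cvg_within_filter (na_continuous na_norm (x := X)).
have na_xs_near : \forall n \near \oo, na (xs n) = 1 by apply: nearW; exact: na_xs.
apply/le_anti/andP; split.
- apply: (cluster_le_within X_cluster (A := setT) (g := fun=> 1)) => //.
    exact: cvg_cst.
  by apply: filterS na_xs_near => n ->.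
- apply: (cluster_le_within X_cluster (A := setT) (f := fun=> 1)) => //.
    exact: cvg_cst.
  by apply: filterS na_xs_near => n ->.
Qed.

Lemma T_coord_cvg i (h : R) : 0 <= h ->
  T (h *: y) 0 i @[y --> within [set x | nonneg x] (nbhs X)] --> T (h *: X) 0 i.
Proof.
move=> h0; have TX := (subspace_continuousP _ T).1 T_cont _ (nonnegZ h0 cluster_nonneg).
have TZ : T (h *: y) @[y --> within [set x | nonneg x] (nbhs X)] --> T (h *: X).
  exact: cvg_comp (cvg_scale_within_nonneg (x := X) h0) TX.
exact: cvg_comp TZ (@coord_continuous R 1 N 0 i (T (h *: X))).
Qed.

Lemma cluster_ray_quotient_ge i (h : R) : 0 < h -> lam_inf * X 0 i <= T (h *: X) 0 i / h.
Proof.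
move=> h0; apply: (cluster_le_within X_cluster (A := [set x | nonneg x])
  (f := fun y => lam_inf * y 0 i) (g := fun y => T (h *: y) 0 i / h)).
- exact: xs_nonneg.
- exact: cvg_within_filter (cvgMr (@coord_continuous R 1 N 0 i X)).
- exact: cvgMl (T_coord_cvg (i := i) (ltW h0)).
near=> n.
have hn : h <= pbar n by near: n; exact: (cvgryPge _).1 pbar_oo h.
apply: le_trans (si_ratio_nonincr (T_si i) (xs_nonneg n) h0 hn).
rewrite /= T_scale_xs mulrCA mulrAC mulfV ?gt_eqF // mul1r.
by apply: ler_wpM2r; [exact: xs_nonneg | exact: lam_inf_le].
Unshelve. all: by end_near.
Qed.

Lemma cluster_ray_slope_le i (e : R) : 0 < e < 1 ->
  (1 - e) * ray_slope (fun y => T y 0 i) X <= (lam_inf + e) * (X 0 i + e).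
Proof.
move=> /andP[e0 e1]; have e1' : 0 < 1 - e by rewrite subr_gt0.
have X_near : \forall y \near X, (nonneg y -> vle ((1 - e) *: X) y) /\ y 0 i < X 0 i + e.
  apply: filterI; first by apply: near_vle_scale cluster_nonneg _; rewrite gtrBl.
  by apply: (cvgr_lt _ (@coord_continuous R 1 N 0 i X)); rewrite ltrDl.
have [n [lam_lt [/(_ (xs_nonneg n)) Xxs xs_lt]]] :=
  cluster_near X_cluster (near_lam_pbar_lt e0) X_near.
have pn := pbar_gt0 n; have h0 : 0 < (1 - e) * pbar n by rewrite mulr_gt0.
have T_le : T (((1 - e) * pbar n) *: X) 0 i <= lam (pbar n) * (pbar n * xs n 0 i).
  rewrite -T_scale_xs; apply: (si_le (T_si i)).
    exact: nonnegZ (ltW h0) cluster_nonneg.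
  by rewrite mulrC -scalerA; exact: vleZ (ltW pn) Xxs.
set A := T _ 0 i in T_le.
apply: (@le_trans _ _ (A / pbar n)).
  have -> : A / pbar n = (1 - e) * (A / ((1 - e) * pbar n)) by field; rewrite !gt_eqF.
  by rewrite ler_pM2l //; have := ray_slope_le (T_si i) cluster_nonneg h0.
apply: (@le_trans _ _ (lam (pbar n) * xs n 0 i)).
  by rewrite ler_pdivrMr // mulrAC -mulrA.
by apply: ler_pM; [exact/ltW/lam_gt0 | exact: xs_nonneg | exact: ltW | exact: ltW].
Qed.

Lemma cluster_ray_slope i : ray_slope (fun y => T y 0 i) X = lam_inf * X 0 i.
Proof.
apply/le_anti/andP; split; last first.
  by apply: ray_slope_ge => h h0; exact: cluster_ray_quotient_ge.
have s0 := ray_slope_ge0 (T_si i) cluster_nonneg.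
have l0 := lam_inf_ge0; have X0 := cluster_nonneg i.
apply: (ler_add_mul01 (K := ray_slope (fun y => T y 0 i) X + lam_inf + X 0 i + 1)).
move=> e /andP[e0 e1]; have := cluster_ray_slope_le i (introT andP (conj e0 e1)).
nra.
Qed.

Lemma cluster_solves_asymptotic : solves_asymptotic T na X lam_inf.
Proof.
split; [exact: cluster_nonneg | exact: lam_inf_ge0 | exact: cluster_na |].
move=> i; rewrite /asymptotic_mapping (asymptotic_fun_ray (T_si i) cluster_nonneg).
by rewrite cluster_ray_slope.
Qed.

End cluster_point.

Lemma xs_bounded n j : `|xs n 0 j| <= (na (delta_mx 0 j))^-1.
Proof.
rewrite ger0_norm ?xs_nonneg // -div1r ler_pdivlMr ?na_delta_gt0 // -(na_xs n).
exact: coord_le_na (xs_nonneg n).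
Qed.

Lemma xs_cvg_unique_solution x' l' :
  (forall x l, solves_asymptotic T na x l -> x = x' /\ l = l') ->
  xs @ \oo --> x' /\ l' = lam_inf.
Proof.
move=> sol_unique.
have cluster_sol y : cluster (xs @ \oo) y -> y = x' /\ lam_inf = l'.
  by move=> y_cluster; exact/sol_unique/cluster_solves_asymptotic.
have xs_cvg : xs @ \oo --> x'.
  by apply: (cvg_bounded_unique_cluster xs_bounded) => y /cluster_sol[].
split=> //; suff /cluster_sol[] : cluster (xs @ \oo) x' by [].
by rewrite cluster_cvgE; exists (xs @ \oo); [exact: fmap_proper_filter | split].
Qed.

End normalized_powers.
End power_budget.

Theorem proposition2 (R : realType) (N : nat)
  (T : 'rV[R]_N -> 'rV[R]_N) (na : 'rV[R]_N -> R)
  (pp : R -> 'rV[R]_N) (cc : R -> R) :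
  standard_interference_mapping T ->
  monotone_norm na ->
  (* (pp pb, cc pb) is the (unique) solution of the budget problem, pb > 0 *)
  (forall pb, 0 < pb -> solves_budget T na pb (pp pb) (cc pb)) ->
  (* known facts about this solution (stated in the context) *)
  (forall pb, 0 < pb ->
     [/\ positive (pp pb), 0 < cc pb, T (pp pb) = (cc pb)^-1 *: pp pb
       & na (pp pb) = pb]) ->
  (forall pb1 pb2, 0 < pb1 -> pb1 < pb2 -> cc pb1 < cc pb2) ->
  let lam := fun pb => (cc pb)^-1 in
  let lam_oo := lim (lam pb @[pb --> +oo]) in
  [/\
   (* (i) *)
   cvg (lam pb @[pb --> +oo]) /\ 0 <= lam_oo,
   (* (ii) *)
   {within [set x | nonneg x], continuous T} ->
   forall pbar : nat -> R,
     (forall n, 0 < pbar n) ->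
     {homo pbar : n m / (n <= m)%N >-> n <= m} ->
     pbar @ \oo --> +oo ->
     let xs := fun n => (na (pp (pbar n)))^-1 *: pp (pbar n) in
     forall xinf, nonneg xinf -> cluster (xs @ \oo) xinf ->
       solves_asymptotic T na xinf lam_oo
   &
   (* (iii) *)
   {within [set x | nonneg x], continuous T} ->
   forall pbar : nat -> R,
     (forall n, 0 < pbar n) ->
     {homo pbar : n m / (n <= m)%N >-> n <= m} ->
     pbar @ \oo --> +oo ->
     let xs := fun n => (na (pp (pbar n)))^-1 *: pp (pbar n) in
     forall x' l', solves_asymptotic T na x' l' ->
       (forall x l, solves_asymptotic T na x l -> x = x' /\ l = l') ->
       positive x' -> 0 < l' ->
       xs @ \oo --> x' /\ l' = lam_oo].
Proof.
move=> T_si na_norm _ pp_sol cc_incr lam lam_oo.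
have lam_ooE : lam_oo = inf [set lam pb | pb in [set pb : R | 0 < pb]].
  exact: cvg_lim (lam_cvg pp_sol cc_incr).
split.
- split; first exact: cvgP (lam_cvg pp_sol cc_incr).
  by rewrite lam_ooE; exact: lam_inf_ge0 pp_sol.
- move=> T_cont pbar pbar_gt0 _ pbar_oo xs X _ X_cluster; rewrite lam_ooE.
  exact: (cluster_solves_asymptotic T_si na_norm pp_sol cc_incr pbar_gt0 pbar_oo
    T_cont X_cluster).
- move=> T_cont pbar pbar_gt0 _ pbar_oo xs x' l' _ sol_unique _ _; rewrite lam_ooE.
  exact: (xs_cvg_unique_solution T_si na_norm pp_sol cc_incr pbar_gt0 pbar_oo
    T_cont sol_unique).
Qed.
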